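(* For MLAPD on a path of depth $D$ (a path graph with $D$ nodes whose root is an endpoint), the online algorithm \textsc{Double} is $(4-2^{1-\frac{D}{2}})$-competitive.
   Context: MLAPD: an instance is a rooted tree $\mathcal{T}$ with root $r$ and positive node costs $c(v)>0$, together with requests $\rho=(v,a,d)$ (node, arrival time, deadline $d\ge a$; deadlines distinct). A service $(S,t)$ is a subtree $S\ni r$ transmitted at time $t$, costing $c(S)=\sum_{u\in S}c(u)$; it satisfies $(v,a,d)$ if $v\in S$ and $a\le t\le d$. A feasible schedule satisfies every request; its cost is the sum of service costs. Online: requests revealed at arrival. $c$-competitive: cost at most $c$ times optimal on every instance. For request $\rho$ at $v$, $P_\rho$ is the $r$–$v$ path node set; $c(r\to\gamma\mid S)=c(P_\gamma\setminus S)$. A request is pending at time $t$ if it has arrived by $t$ and was not satisfied earlier. \textsc{Double}: when a pending request $\rho$ reaches its deadline $d_\rho$, set $S=P_\rho$; repeat: if no pending request is unsatisfied by $S$ stop; else let $\gamma$ be the pending request of earliest deadline not satisfied by $S$; if $c(S)+c(r\to\gamma\mid S)>2c(P_\rho)$ stop, else $S\gets S\cup P_\gamma$. Transmit $(S,d_\rho)$. *)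

From HB Require Import structures.
From mathcomp Require Import all_boot all_order all_algebra.
From mathcomp Require Import reals exp.
Set Implicit Arguments. Unset Strict Implicit. Unset Printing Implicit Defensive.
Import Order.TTheory GRing.Theory Num.Theory.
Local Open Scope ring_scope.

(* MLAPD on a path with D nodes 0,1,...,D-1; node 0 is the root (an endpoint)
   and the parent of node u > 0 is u-1.  Nodes are the ordinals 'I_D. *)

Record request (D : nat) (R : Type) := Request {
  rnode : 'I_D ; rarr : R ; rdl : R }.

Definition req_to (D : nat) (R : Type) (r : request D R) : 'I_D * R * R :=
  (rnode r, rarr r, rdl r).
Definition of_req (D : nat) (R : Type) (x : 'I_D * R * R) : request D R :=
  Request x.1.1 x.1.2 x.2.
Lemma req_toK (D : nat) (R : Type) : cancel (@req_to D R) (@of_req D R).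
Proof. by case. Qed.
HB.instance Definition _ (D : nat) (R : realType) :=
  Equality.copy (request D R) (can_type (@req_toK D R)).

Definition service (D : nat) (R : Type) := ({set 'I_D} * R)%type.

Definition pathset (D : nat) (v : 'I_D) : {set 'I_D} := [set u : 'I_D | u <= v]%N.

Definition setcost (R : realType) (D : nat) (c : 'I_D -> R) (S : {set 'I_D}) : R :=
  \sum_(u in S) c u.

Definition rooted_subtree (D : nat) (S : {set 'I_D}) : bool :=
  (S != set0) && [forall u in S, forall w : 'I_D, (w <= u)%N ==> (w \in S)].

Definition satisfies (R : realType) (D : nat) (s : service D R) (rho : request D R) : bool :=
  (rnode rho \in s.1) && (rarr rho <= s.2 <= rdl rho).

Definition feasible (R : realType) (D : nat) (reqs : seq (request D R))
    (sched : seq (service D R)) : Prop :=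
  (forall s, s \in sched -> rooted_subtree s.1) /\
  (forall rho, rho \in reqs -> exists2 s, s \in sched & satisfies s rho).

Definition sched_cost (R : realType) (D : nat) (c : 'I_D -> R) (sched : seq (service D R)) : R :=
  \sum_(s <- sched) setcost c s.1.

Definition valid_instance (R : realType) (D : nat) (c : 'I_D -> R) (reqs : seq (request D R)) : Prop :=
  (forall u, 0 < c u) /\
  (forall rho, rho \in reqs -> rarr rho <= rdl rho) /\
  uniq [seq rdl rho | rho <- reqs].

(* The set of satisfied requests is recorded by their deadlines (which are distinct). *)

Definition sortdl (R : realType) (D : nat) (reqs : seq (request D R)) : seq (request D R) :=
  sort (fun r1 r2 : request D R => rdl r1 <= rdl r2) reqs.

Definition pending (R : realType) (D : nat) (t : R) (sat : seq R) (rho : request D R) : bool :=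
  (rarr rho <= t) && (rdl rho \notin sat).

(* L is sorted by deadline, so the first pending request
   of L not satisfied by S is the one of earliest deadline.  [budget] = c(P_rho).
   Each iteration adds the path of a new request (which is then satisfied by S),
   so [size L] iterations of fuel always suffice for the loop to stop by itself. *)
Fixpoint grow (R : realType) (D : nat) (c : 'I_D -> R) (t : R) (sat : seq R)
    (L : seq (request D R)) (budget : R) (fuel : nat) (S : {set 'I_D}) : {set 'I_D} :=
  match fuel with
  | 0 => S
  | fuel'.+1 =>
    match [seq g <- L | pending t sat g && (rnode g \notin S)] with
    | [::] => S
    | g :: _ =>
      if setcost c S + setcost c (pathset (rnode g) :\: S) > 2 * budget then S
      else grow c t sat L budget fuel' (S :|: pathset (rnode g))
    end
  end.

Definition double_step (R : realType) (D : nat) (c : 'I_D -> R) (L : seq (request D R))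
    (st : seq R * seq (service D R)) (rho : request D R) : seq R * seq (service D R) :=
  let: (sat, sched) := st in
  let t := rdl rho in
  if ~~ pending t sat rho then (sat, sched)
  else
    let P := pathset (rnode rho) in
    let S := grow c t sat L (setcost c P) (size L) P in
    (sat ++ [seq rdl g | g <- L & pending t sat g && (rnode g \in S)],
     rcons sched (S, t)).

Definition Double (R : realType) (D : nat) (c : 'I_D -> R) (reqs : seq (request D R))
    : seq (service D R) :=
  let L := sortdl reqs in (foldl (double_step c L) ([::], [::]) L).2.

(* An algorithm [alg] (mapping costs and requests to a schedule) is r-competitive on
   paths with D nodes: on every valid instance its schedule is feasible and costs at most
   r times the cost of any feasible schedule (equivalently, r times the optimum). *)
Definition competitive (R : realType) (D : nat)
    (alg : ('I_D -> R) -> seq (request D R) -> seq (service D R)) (r : R) : Prop :=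
  forall (c : 'I_D -> R) (reqs : seq (request D R)),
    valid_instance c reqs ->
    feasible reqs (alg c reqs) /\
    forall opt : seq (service D R), feasible reqs opt ->
      sched_cost c (alg c reqs) <= r * sched_cost c opt.

From HB Require Import structures.
From mathcomp Require Import all_boot all_order all_algebra.
From mathcomp Require Import reals exp.
From mathcomp Require Import ring lra zify.
Import Order.TTheory GRing.Theory Num.Theory.
Set Implicit Arguments. Unset Strict Implicit. Unset Printing Implicit Defensive.
Local Open Scope ring_scope.

(* On a path every rooted subtree is a prefix [pathset m]; write x_k for the
   cost c(P_k) of the path to the node of the k-th request (by deadline).
   1. The inner loop of Double starts from the path P_rho of the triggering
      request and only ever extends it to longer prefixes, stopping either
      when nothing pending is left outside or when the next pending request
      of earliest deadline lies on a path of cost > 2 x_rho ([grow_spec]).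
   2. Hence two services at deadlines d_a < d_b such that the request b was
      already present at d_a satisfy the doubling relation
      x_b > 2 x_a, and the service at d_a costs at most 2 x_a and lies
      strictly below the node of b ([doubling_pair]).
   3. Fix a service (S, t) of any feasible schedule and the services of
      Double triggered by requests that (S, t) satisfies.  All these requests
      are present at time t, so consecutive ones form doubling pairs; a
      potential argument with the weight [discount v] = 2^(1 - ceil(v/2))
      bounds their total cost by (4 - discount) c(S) ([charged_bound]).
   4. Charging every service of Double to the first service of the other
      schedule satisfying its trigger gives the theorem. *)

Lemma count_lt (T : eqType) (p q : pred T) (s : seq T) (x : T) :
  (forall y, q y -> p y) -> x \in s -> p x -> ~~ q x -> (count q s < count p s)%N.
Proof.
move=> qp; elim: s => //= y s IH; rewrite in_cons => /orP [/eqP <-|xs] px nqx.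
  rewrite px (negbTE nqx) add0n add1n ltnS.
  by apply: sub_count => z /qp.
have := IH xs px nqx.
case: (boolP (q y)) => [/qp -> | _]; case: (p y) => /=; lia.
Qed.

Lemma find_switch (P : nat -> bool) (a N : nat) : (a <= N)%N -> ~~ P a -> P N ->
  exists e, [/\ (a <= e)%N, (e < N)%N, ~~ P e & P e.+1].
Proof.
elim: N => [|N IH] aN nPa PN.
  by move: aN; rewrite leqn0 => /eqP Ea; move: nPa; rewrite Ea PN.
have aN' : (a <= N)%N.
  by move: aN; rewrite leq_eqVlt => /orP [/eqP Ea|//]; move: nPa; rewrite Ea PN.
case: (boolP (P N)) => PN'; last by exists N; split.
by have [e [ae eN nPe Pe]] := IH aN' nPa PN'; exists e; split => //; lia.
Qed.

Lemma sum_by_label (R : realType) (F : nat -> R) (P : pred nat) (f : nat -> nat)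
    (n m : nat) : (forall k, (k < n)%N -> P k -> (f k < m)%N) ->
  \sum_(0 <= k < n | P k) F k =
    \sum_(0 <= i < m) \sum_(0 <= k < n | P k && (f k == i)) F k.
Proof.
move=> fm.
transitivity (\sum_(0 <= k < n | P k) \sum_(0 <= i < m | f k == i) F k).
  rewrite big_nat_cond [RHS]big_nat_cond; apply: eq_bigr => k /andP [/andP [_ kn] Pk].
  rewrite (eq_bigl (fun i => i == f k)); last by move=> i; rewrite eq_sym.
  by rewrite big_nat1_eq fm.
by rewrite (exchange_big_dep_nat predT).
Qed.

Section PathCosts.
Variables (R : realType) (D : nat) (c : 'I_D -> R).
Hypothesis c_pos : forall u, 0 < c u.

Lemma in_pathset (u v : 'I_D) : (u \in pathset v) = (u <= v)%N.
Proof. by rewrite inE. Qed.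

Lemma notin_pathset (u v : 'I_D) : (u \notin pathset v) = (v < u)%N.
Proof. by rewrite in_pathset -ltnNge. Qed.

Lemma pathset_sub (a b : 'I_D) : (a <= b)%N -> pathset a \subset pathset b.
Proof. by move=> ab; apply/subsetP => u; rewrite !in_pathset => ua; lia. Qed.

Lemma pathsetU (a b : 'I_D) : (a <= b)%N -> pathset a :|: pathset b = pathset b.
Proof. by move=> ab; apply/setUidPr; apply: pathset_sub. Qed.

Lemma setcost_ge0 (S : {set 'I_D}) : 0 <= setcost c S.
Proof. by apply: sumr_ge0 => u _; apply: ltW. Qed.

Lemma setcost_split (S P : {set 'I_D}) : S \subset P ->
  setcost c P = setcost c S + setcost c (P :\: S).
Proof.
move=> SP; rewrite /setcost (big_setID S) /=.
by have -> : P :&: S = S by apply/setIidPr.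
Qed.

Lemma setcost_sub (S P : {set 'I_D}) : S \subset P -> setcost c S <= setcost c P.
Proof. by move=> SP; rewrite (setcost_split SP) lerDl setcost_ge0. Qed.

Lemma rooted_pathset (m : 'I_D) : rooted_subtree (pathset m).
Proof.
apply/andP; split; first by apply/set0Pn; exists m; rewrite in_pathset.
apply/forallP => u; apply/implyP; rewrite in_pathset => um.
by apply/forallP => w; apply/implyP => wu; rewrite in_pathset; lia.
Qed.

Lemma rooted_pathcost (S : {set 'I_D}) (v : 'I_D) : rooted_subtree S -> v \in S ->
  setcost c (pathset v) <= setcost c S.
Proof.
move=> /andP [_ /forallP closed] vS; apply: setcost_sub; apply/subsetP => w.
rewrite in_pathset => wv.
by have := closed v; rewrite vS /= => /forallP /(_ w); rewrite wv.
Qed.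

End PathCosts.

Section Grow.
Variables (R : realType) (D : nat) (c : 'I_D -> R).
Variable L : seq (request D R).
Hypothesis L_sorted : sorted (fun r1 r2 : request D R => rdl r1 <= rdl r2) L.

Lemma grow_spec (t : R) (sat : seq R) (B : R) (fuel : nat) (v : 'I_D) :
  setcost c (pathset v) <= 2 * B ->
  (count (fun g => pending t sat g && (rnode g \notin pathset v)) L <= fuel)%N ->
  exists m : 'I_D, [/\ grow c t sat L B fuel (pathset v) = pathset m, (v <= m)%N,
    setcost c (pathset m) <= 2 * B &
    forall h, h \in L -> pending t sat h -> (m < rnode h)%N ->
      exists2 g, g \in L & [/\ pending t sat g, (m < rnode g)%N,
         2 * B < setcost c (pathset (rnode g)) & rdl g <= rdl h]].
Proof.
elim: fuel v => [|f IH] v Cv cnt /=.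
  exists v; split => // h hL ph vh.
  have : has (fun g => pending t sat g && (rnode g \notin pathset v)) L.
    by apply/hasP; exists h => //; rewrite ph notin_pathset.
  by rewrite has_count; move: cnt; rewrite leqn0 => /eqP ->.
case E: [seq g <- L | pending t sat g && (rnode g \notin pathset v)] => [|g rest].
  exists v; split => // h hL ph vh.
  have : h \in [seq g <- L | pending t sat g && (rnode g \notin pathset v)].
    by rewrite mem_filter ph notin_pathset vh.
  by rewrite E.
have : g \in [seq g <- L | pending t sat g && (rnode g \notin pathset v)].
  by rewrite E mem_head.
rewrite mem_filter notin_pathset => /andP [/andP [pg vg] gL].
rewrite -(setcost_split c (pathset_sub (ltnW vg))).
case: ifP => over_budget.
  (* The loop stops at [g], the pending request of earliest deadline beyond [v]. *)
  exists v; split => // h hL ph vh; exists g => //; split => //.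
  have : h \in g :: rest by rewrite -E mem_filter ph notin_pathset vh.
  rewrite in_cons => /orP [/eqP -> // | hr].
  have le_trans' : transitive (fun r1 r2 : request D R => rdl r1 <= rdl r2).
    by move=> y x z; apply: le_trans.
  have srt : sorted (fun r1 r2 : request D R => rdl r1 <= rdl r2) (g :: rest).
    by rewrite -E; apply: sorted_filter.
  by move: (order_path_min le_trans' srt) => /allP /(_ h hr).
rewrite pathsetU ?(ltnW vg) //.
have Cg : setcost c (pathset (rnode g)) <= 2 * B by rewrite leNgt over_budget.
have cnt' : (count (fun g0 => pending t sat g0 && (rnode g0 \notin pathset (rnode g))) L
    <= f)%N.
  rewrite -ltnS; apply: leq_trans cnt; apply: (count_lt (x := g)) => //.
  - by move=> y /andP [-> /=]; rewrite !notin_pathset => gy; lia.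
  - by rewrite pg notin_pathset.
  - by rewrite notin_pathset ltnn andbF.
have [m [-> gm Cm Hm]] := IH (rnode g) Cg cnt'.
by exists m; split => //; lia.
Qed.

End Grow.

(* The potential weight [discount v] = 2 / 2^ceil(v/2) = 2^(1 - ceil(v/2)) of a
   node at depth [v]: it halves every two levels and, for the deepest node
   D-1, it is at least 2^(1 - D/2).  The ratio of Double is 4 - discount. *)
Section Discount.
Variable R : realType.

Definition discount (v : nat) : R := 2 / 2 ^+ uphalf v.

Lemma discount_le2 (v : nat) : discount v <= 2.
Proof. by rewrite /discount ler_pdivrMr ?exprn_gt0 // ler_peMr // exprn_ege1 //; lra. Qed.

Lemma discount_anti (v w : nat) : (v <= w)%N -> discount w <= discount v.
Proof.
move=> vw; rewrite /discount ler_pM2l // lef_pV2 ?posrE ?exprn_gt0 //.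
by rewrite ler_eXn2l; [exact: uphalf_leq | lra].
Qed.

Lemma discountSS (v : nat) : discount v.+2 = discount v / 2.
Proof.
by rewrite /discount (_ : uphalf v.+2 = (uphalf v).+1) // exprS invfM mulrA [RHS]mulrAC.
Qed.

(* One level deeper, the weight drops by at most what the doubling allows. *)
Lemma discountS (v : nat) : 2 * discount v.+1 - discount v <= 1.
Proof.
rewrite /discount; have -> : uphalf v.+1 = (v./2).+1 by [].
have [o|e] := boolP (odd v).
- have -> : uphalf v = (v./2).+1 by rewrite uphalf_half o.
  have two_le : (2 : R) <= 2 ^+ (v./2).+1.
    by rewrite exprS ler_peMr // ?exprn_ege1 //; lra.
  have : 2 / 2 ^+ (v./2).+1 <= 1 :> R by rewrite ler_pdivrMr ?mul1r; lra.
  lra.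
- have -> : uphalf v = v./2 by rewrite uphalf_half (negbTE e).
  have pos : (0 : R) < 2 ^+ v./2 by rewrite exprn_gt0.
  have -> : 2 * (2 / 2 ^+ (v./2).+1) - 2 / 2 ^+ v./2 = 0 :> R.
    by rewrite exprS; field; rewrite gt_eqF.
  by [].
Qed.

Lemma discount_lower_bound (D v : nat) : (v < D)%N ->
  2 `^ (1 - D%:R / 2) <= discount v.
Proof.
move=> vD; apply: (@le_trans _ _ (discount D.-1)); last by apply: discount_anti; lia.
rewrite /discount; have -> : uphalf D.-1 = D./2 by case: D vD => // n _; rewrite uphalfE.
have half_le : (D./2)%:R <= D%:R / 2 :> R.
  rewrite ler_pdivlMr // -natrM ler_nat.
  by rewrite -{2}(odd_double_half D) muln2 leq_addl.
apply: (@le_trans _ _ (2 `^ (1 - (D./2)%:R))); first by apply: ler_powR => //; lra.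
rewrite powRB; last by rewrite pnatr_eq0 implybT.
by rewrite powRr1 ?ler0n // powR_mulrn ?ler0n.
Qed.

(* The potential step: a service of cost [xm] (a path to depth [m], with
   [xm = xv] when it is just the trigger's path) charged to a trigger at depth
   [v] of cost [xv], followed by a trigger at depth [w > m] of cost [xw >= 2 xv],
   is absorbed by the potential (2 - discount) of the later trigger. *)
Lemma discount_step (v m w : nat) (xv xm xw : R) :
  (v <= m)%N -> (m < w)%N -> 0 <= xv -> (m = v -> xm = xv) ->
  xm <= 2 * xv -> 2 * xv <= xw ->
  (2 - discount v) * xv + xm <= (2 - discount w) * xw.
Proof.
move=> vm mw xv_ge0 same xm_le xw_ge.
have gv2 := discount_le2 v; have gw2 := discount_le2 w.
case: (eqVneq m v) => [Emv|Nmv].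
  rewrite (same Emv).
  have gw_le : discount w <= discount v.+1 by apply: discount_anti; lia.
  have g1 := discountS v; have g12 := discount_le2 v.+1.
  have h1 : 0 <= (discount v.+1 - discount w) * xw by apply: mulr_ge0; lra.
  have h2 : 0 <= (2 - discount v.+1) * (xw - 2 * xv) by apply: mulr_ge0; lra.
  have h3 : 0 <= (1 - 2 * discount v.+1 + discount v) * xv by apply: mulr_ge0; lra.
  nra.
have gw_le : discount w <= discount v / 2.
  by rewrite -discountSS; apply: discount_anti; lia.
have h1 : 0 <= (discount v / 2 - discount w) * xw by apply: mulr_ge0; lra.
have h2 : 0 <= (2 - discount v / 2) * (xw - 2 * xv) by apply: mulr_ge0; lra.
nra.
Qed.

End Discount.

Section Double.
Variables (R : realType) (D : nat) (c : 'I_D -> R) (reqs : seq (request D R)).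
Variable x0 : request D R.
Hypothesis c_pos : forall u, 0 < c u.
Hypothesis arr_le_dl : forall rho, rho \in reqs -> rarr rho <= rdl rho.
Hypothesis dl_uniq : uniq [seq rdl rho | rho <- reqs].

Local Notation L := (sortdl reqs).
Local Notation n := (size (sortdl reqs)).
Local Notation le_dl := (fun r1 r2 : request D R => rdl r1 <= rdl r2).

Definition req (k : nat) : request D R := nth x0 L k.

Local Notation pcost k := (setcost c (pathset (rnode (req k)))).

Lemma mem_sortdl (g : request D R) : (g \in L) = (g \in reqs).
Proof. exact: mem_sort. Qed.

Lemma sortdl_sorted : sorted le_dl L.
Proof. by apply: sort_sorted => x y; apply: le_total. Qed.

Lemma sortdl_dl_uniq : uniq [seq rdl g | g <- L].
Proof. by rewrite (perm_uniq (perm_map _ (permEl (perm_sort _ _)))). Qed.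

Lemma req_mem (k : nat) : (k < n)%N -> req k \in L.
Proof. exact: mem_nth. Qed.

Lemma req_index (g : request D R) : g \in L -> exists2 k, (k < n)%N & g = req k.
Proof. by move=> gL; exists (index g L); rewrite ?index_mem // /req nth_index. Qed.

Lemma dl_le (a b : nat) : (a <= b)%N -> (b < n)%N -> rdl (req a) <= rdl (req b).
Proof.
move=> ab bn; have tr : transitive le_dl by move=> y x z; apply: le_trans.
by apply: (sorted_leq_nth tr _ x0 sortdl_sorted) => //; rewrite inE /=; lia.
Qed.

Lemma dl_inj (a b : nat) : (a < n)%N -> (b < n)%N -> rdl (req a) = rdl (req b) -> a = b.
Proof.
move=> an bn e; apply/eqP; rewrite -(nth_uniq (rdl x0) _ _ sortdl_dl_uniq) ?size_map //.
by rewrite !(nth_map x0) // -/(req a) -/(req b) e.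
Qed.

Lemma dl_inj_mem (g h : request D R) : g \in L -> h \in L -> rdl g = rdl h -> g = h.
Proof. by move=> /req_index [a an ->] /req_index [b bn ->] /dl_inj => /(_ an bn) ->. Qed.

Lemma dl_lt_index (a b : nat) : (a < n)%N -> (b < n)%N ->
  rdl (req a) < rdl (req b) -> (a < b)%N.
Proof. by move=> an bn; case: (leqP b a) => // ba; rewrite ltNge dl_le. Qed.

Definition state (k : nat) : seq R * seq (service D R) :=
  foldl (double_step c L) ([::], [::]) (take k L).
Definition satisfied (k : nat) : seq R := (state k).1.
Definition served (k : nat) : seq (service D R) := (state k).2.
Definition fires (k : nat) : bool := pending (rdl (req k)) (satisfied k) (req k).
Definition service_set (k : nat) : {set 'I_D} :=
  grow c (rdl (req k)) (satisfied k) L (pcost k) n (pathset (rnode (req k))).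

Lemma state_step (k : nat) : (k < n)%N -> state k.+1 = double_step c L (state k) (req k).
Proof. by move=> kn; rewrite /state (take_nth x0 kn) foldl_rcons. Qed.

Lemma satisfied_step (k : nat) : (k < n)%N -> satisfied k.+1 = if fires k then
    satisfied k ++ [seq rdl g | g <- L & pending (rdl (req k)) (satisfied k) g
                                         && (rnode g \in service_set k)]
  else satisfied k.
Proof.
move=> kn; rewrite /fires /service_set /satisfied state_step //.
by case: (state k) => s1 s2 /=; case: (pending (rdl (req k)) s1 (req k)).
Qed.

Lemma served_step (k : nat) : (k < n)%N -> served k.+1 =
  if fires k then rcons (served k) (service_set k, rdl (req k)) else served k.
Proof.
move=> kn; rewrite /fires /service_set /served /satisfied state_step //.
by case: (state k) => s1 s2 /=; case: (pending _ _ _).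
Qed.

Lemma served_all : Double c reqs = served n.
Proof. by rewrite /Double /served /state take_size. Qed.

Lemma served_def (k : nat) : (k <= n)%N ->
  served k = [seq (service_set j, rdl (req j)) | j <- [seq j <- iota 0 k | fires j]].
Proof.
elim: k => [|k IH] kn; first by rewrite /served /state take0.
rewrite served_step // -addn1 iotaD filter_cat map_cat -IH ?(ltnW kn) //= add0n.
by case: ifP => _; rewrite ?cats0 ?cats1.
Qed.

Lemma satisfied_mono (i j : nat) : (i <= j)%N -> (j <= n)%N ->
  {subset satisfied i <= satisfied j}.
Proof.
move=> ij; elim: j ij => [|j IH] ij jn x; first by move: ij; rewrite leqn0 => /eqP ->.
move: ij; rewrite leq_eqVlt => /orP [/eqP -> //|]; rewrite ltnS => ij xi.
rewrite satisfied_step //; have := IH ij (ltnW jn) x xi.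
by case: ifP => // _; rewrite mem_cat => ->.
Qed.

Lemma service_set_spec (k : nat) : exists m : 'I_D,
  [/\ service_set k = pathset m, (rnode (req k) <= m)%N, setcost c (pathset m) <= 2 * pcost k &
    forall h, h \in L -> pending (rdl (req k)) (satisfied k) h -> (m < rnode h)%N ->
      exists2 g, g \in L & [/\ pending (rdl (req k)) (satisfied k) g, (m < rnode g)%N,
         2 * pcost k < setcost c (pathset (rnode g)) & rdl g <= rdl h]].
Proof.
apply: (grow_spec sortdl_sorted); last exact: count_size.
by have := setcost_ge0 c_pos (pathset (rnode (req k))); lra.
Qed.

Lemma passed_satisfied (k : nat) : (k <= n)%N ->
  forall j, (j < k)%N -> rdl (req j) \in satisfied k.
Proof.
elim: k => [//|k IH] kn j; rewrite ltnS leq_eqVlt => /orP [/eqP ->|jk]; last first.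
  by apply: (satisfied_mono (leqnSn k) kn); apply: IH => //; lia.
rewrite satisfied_step //; case: ifP => fk.
  rewrite mem_cat; apply/orP; right; apply/mapP; exists (req k) => //.
  rewrite mem_filter req_mem // andbT; apply/andP; split; first exact: fk.
  by have [m [-> vm _ _]] := service_set_spec k; rewrite in_pathset.
have rk : req k \in reqs by rewrite -mem_sortdl req_mem.
by move: fk; rewrite /fires /pending arr_le_dl //= => /negbFE.
Qed.

Lemma pending_dl (k : nat) (g : request D R) : (k < n)%N -> g \in L ->
  pending (rdl (req k)) (satisfied k) g -> rdl (req k) <= rdl g.
Proof.
move=> kn /req_index [j jn ->] /andP [_ nj].
case: (ltnP j k) => jk; last exact: dl_le.
by move: nj; rewrite passed_satisfied ?(ltnW kn).
Qed.

Lemma satisfied_new (k : nat) (x : R) : (k < n)%N -> x \in satisfied k.+1 ->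
  x \notin satisfied k -> fires k /\ exists2 g, g \in L &
    [/\ pending (rdl (req k)) (satisfied k) g, rnode g \in service_set k & x = rdl g].
Proof.
move=> kn; rewrite satisfied_step //; case: ifP => fk; last by move=> ->.
rewrite mem_cat => /orP [-> //|/mapP [g]].
by rewrite mem_filter => /andP [/andP [pg gS] gL] -> _; split => //; exists g.
Qed.

Lemma satisfied_added (k : nat) (g : request D R) : (k < n)%N -> fires k -> g \in L ->
  pending (rdl (req k)) (satisfied k) g -> rnode g \in service_set k ->
  rdl g \in satisfied k.+1.
Proof.
move=> kn fk gL pg gS; rewrite satisfied_step // fk mem_cat; apply/orP; right.
by apply/mapP; exists g => //; rewrite mem_filter pg gS.
Qed.

Lemma satisfied_served (k : nat) : (k <= n)%N -> forall g, g \in L ->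
  rdl g \in satisfied k -> exists2 s, s \in served k & satisfies s g.
Proof.
elim: k => [|k IH] kn g gL; first by rewrite /satisfied /state take0 in_nil.
case: (boolP (rdl g \in satisfied k)) => gk gk1.
  have [s si ss] := IH (ltnW kn) g gL gk; exists s => //.
  by rewrite served_step //; case: ifP => // _; rewrite mem_rcons in_cons si orbT.
have [fk [g' g'L [pg' g'S e]]] := satisfied_new kn gk1 gk.
rewrite (dl_inj_mem gL g'L e) in gk1 *.
exists (service_set k, rdl (req k)); first by rewrite served_step // fk mem_rcons mem_head.
rewrite /satisfies /= g'S /=; move: (pg') => /andP [-> _] /=.
exact: pending_dl.
Qed.

(* A firing request [b] already present at an earlier firing deadline [e] is
   not covered by the service at [e] (otherwise it would have been served). *)
Lemma present_not_covered (e b : nat) : (e < b)%N -> (b < n)%N -> fires e -> fires b ->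
  rarr (req b) <= rdl (req e) -> rnode (req b) \notin service_set e.
Proof.
move=> eb bn fe fb ab; apply/negP => inS.
have unsat_b i : (i <= b)%N -> rdl (req b) \notin satisfied i.
  by move=> ib; apply/negP => /(satisfied_mono ib (ltnW bn)); move: fb => /andP [_ /negP].
have pb : pending (rdl (req e)) (satisfied e) (req b) by rewrite /pending ab unsat_b // ltnW.
have := satisfied_added (ltn_trans eb bn) fe (req_mem bn) pb inS.
by apply/negP; apply: unsat_b.
Qed.

(* A request pending at the firing deadline [a], with deadline before that of
   a firing request [b] present at [a], lies no deeper than [b]: it is
   satisfied at some firing deadline in between, whose service misses [b]. *)
Lemma pending_not_deeper (a b : nat) (g : request D R) : (a < b)%N -> (b < n)%N ->
  fires b -> rarr (req b) <= rdl (req a) -> g \in L ->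
  rdl g \notin satisfied a -> rdl g <= rdl (req b) -> (rnode g <= rnode (req b))%N.
Proof.
move=> ab bn fb arr gL nga gb.
have [ci cn gci] := req_index gL; subst g.
case: (ci =P b) => [-> //|ncb].
have cib : (ci < b)%N.
  apply: dl_lt_index => //; rewrite lt_neqAle gb andbT.
  by apply/eqP => /dl_inj => /(_ cn bn).
have aci : (a <= ci)%N.
  by case: (leqP a ci) => // cia; move: nga; rewrite passed_satisfied ?(ltnW (ltn_trans ab bn)).
have gin : rdl (req ci) \in satisfied ci.+1 by apply: passed_satisfied.
have [e [ae eci ne pe]] :=
  find_switch (P := fun e => rdl (req ci) \in satisfied e) (leqW aci) nga gin.
have en : (e < n)%N by apply: leq_ltn_trans (eci : (e <= ci)%N) cn.
have [fe [g' g'L [_ g'S eg]]] := satisfied_new en pe ne.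
rewrite -(dl_inj_mem (req_mem cn) g'L eg) in g'S.
have [me [Se _ _ _]] := service_set_spec e.
have eb : (e < b)%N by apply: leq_ltn_trans (eci : (e <= ci)%N) cib.
have arr' : rarr (req b) <= rdl (req e) by apply: (le_trans arr); apply: dl_le; lia.
have := present_not_covered eb bn fe fb arr'.
by move: g'S; rewrite Se notin_pathset in_pathset => gme bme; lia.
Qed.

Lemma doubling_pair (a b : nat) : (a < b)%N -> (b < n)%N -> fires a -> fires b ->
  rarr (req b) <= rdl (req a) ->
  exists m : 'I_D, [/\ service_set a = pathset m, (rnode (req a) <= m)%N,
    (m < rnode (req b))%N, setcost c (pathset m) <= 2 * pcost a & 2 * pcost a < pcost b].
Proof.
move=> ab bn fa fb arr.
have [m [Sa am Cm stop]] := service_set_spec a.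
have mb : (m < rnode (req b))%N.
  by have := present_not_covered ab bn fa fb arr; rewrite Sa notin_pathset.
exists m; split => //.
have pb : pending (rdl (req a)) (satisfied a) (req b).
  rewrite /pending arr /=; apply/negP => /(satisfied_mono (ltnW ab) (ltnW bn)).
  by move: fb => /andP [_ /negP].
have [g gL [pg _ Cg gb]] := stop (req b) (req_mem bn) pb mb.
apply: (lt_le_trans Cg); apply: setcost_sub => //; apply: pathset_sub.
by apply: (pending_not_deeper ab bn fb arr gL) => //; move: pg => /andP [].
Qed.

Section Charge.
Variables (s : service D R) (G : pred nat).
Hypothesis G_charged : forall k, (k < n)%N -> G k -> fires k /\ satisfies s (req k).

Definition charged (N : nat) : R := \sum_(0 <= k < N | G k) setcost c (service_set k).

Lemma charged_step (N : nat) :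
  charged N.+1 = charged N + (if G N then setcost c (service_set N) else 0).
Proof. by rewrite /charged big_mkcond big_nat_recr //= -big_mkcond. Qed.

(* Potential invariant: the services charged before a later charged trigger
   [i] cost at most (2 - discount) x_i. *)
Lemma charged_before (N : nat) : (N <= n)%N -> forall i, (N <= i)%N -> (i < n)%N -> G i ->
  charged N <= (2 - discount R (rnode (req i))) * pcost i.
Proof.
elim: N => [|N IH] Nn i Ni iN Gi.
  rewrite /charged big_geq //; apply: mulr_ge0; last exact: setcost_ge0.
  by rewrite subr_ge0 discount_le2.
rewrite charged_step; case: ifP => GN.
  2: by rewrite addr0; apply: IH (ltnW Nn) i (ltnW Ni) iN Gi.
have [fN sN] := G_charged Nn GN; have [fi si] := G_charged iN Gi.
have arr : rarr (req i) <= rdl (req N).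
  by move: si sN => /andP [_ /andP [ai _]] /andP [_ /andP [_ bN]]; apply: le_trans ai bN.
have [m [-> Nm mi Cm Ci]] := doubling_pair Ni iN fN fi arr.
apply: (le_trans (lerD (IH (ltnW Nn) N (leqnn N) Nn GN) (lexx _))).
apply: discount_step Nm mi (setcost_ge0 c_pos _) _ Cm (ltW Ci).
by move=> /val_inj ->.
Qed.

Lemma charged_bound : rooted_subtree s.1 ->
  charged n <= (4 - 2 `^ (1 - D%:R / 2)) * setcost c s.1.
Proof.
move=> rooted_s; set rho := 4 - 2 `^ (1 - D%:R / 2).
have cs_ge0 := setcost_ge0 c_pos s.1.
have rho_ge0 : 0 <= rho.
  have := discount_lower_bound R (ltn_ord (rnode x0)).
  by have := discount_le2 R (rnode x0); rewrite /rho; lra.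
suff bound N : (N <= n)%N -> charged N <= rho * setcost c s.1 by exact: bound.
elim: N => [|N IH] Nn; first by rewrite /charged big_geq //; apply: mulr_ge0.
rewrite charged_step; case: ifP => GN; last by rewrite addr0; apply: IH; exact: ltnW.
have [_ /andP [sN _]] := G_charged Nn GN.
have [m [-> _ Cm _]] := service_set_spec N.
have xs : pcost N <= setcost c s.1 by apply: rooted_pathcost.
have gN := discount_lower_bound R (ltn_ord (rnode (req N))).
have gN2 := discount_le2 R (rnode (req N)).
have xN_ge0 : 0 <= pcost N by apply: setcost_ge0.
have h1 : 0 <= (rho - (4 - discount R (rnode (req N)))) * pcost N.
  by apply: mulr_ge0 => //; rewrite /rho; lra.
have h2 : 0 <= rho * (setcost c s.1 - pcost N) by apply: mulr_ge0; lra.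
have := charged_before (ltnW Nn) (leqnn N) Nn GN; nra.
Qed.

End Charge.

Lemma served_rooted : forall s, s \in served n -> rooted_subtree s.1.
Proof.
move=> s; rewrite served_def // => /mapP [j _ ->] /=.
by have [m [-> _ _ _]] := service_set_spec j; exact: rooted_pathset.
Qed.

Lemma served_feasible : feasible reqs (served n).
Proof.
split; first exact: served_rooted.
move=> rho rr; have [k kn ->] := req_index (etrans (mem_sortdl rho) rr).
by apply: satisfied_served => //; [exact: req_mem | exact: passed_satisfied].
Qed.

Lemma served_cost : sched_cost c (served n) =
  \sum_(0 <= k < n | fires k) setcost c (service_set k).
Proof.
rewrite served_def // /sched_cost big_map big_filter /=.
by rewrite /index_iota subn0.
Qed.

(* Charge each service of Double to the first service of [opt] satisfying its
   trigger, and apply [charged_bound] to every service of [opt]. *)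
Lemma served_competitive (opt : seq (service D R)) : feasible reqs opt ->
  sched_cost c (served n) <= (4 - 2 `^ (1 - D%:R / 2)) * sched_cost c opt.
Proof.
move=> [opt_rooted opt_sat].
pose first_sat k := find (fun s => satisfies s (req k)) opt.
have first_sat_lt k : (k < n)%N -> (first_sat k < size opt)%N.
  move=> kn; rewrite -has_find; apply/hasP.
  have [s so ss] := opt_sat (req k) (etrans (esym (mem_sortdl _)) (req_mem kn)).
  by exists s.
rewrite served_cost (@sum_by_label _ _ _ first_sat n (size opt)); last first.
  by move=> k kn _; apply: first_sat_lt.
rewrite /sched_cost (big_nth (set0, 0)) mulr_sumr.
rewrite big_nat_cond [X in _ <= X]big_nat_cond; apply: ler_sum => i /andP [/andP [_ im] _].
apply: (charged_bound (G := fun k => fires k && (first_sat k == i))).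
  move=> k kn /andP [fk /eqP <-]; split => //.
  by apply: (@nth_find _ (set0, 0) (fun s => satisfies s (req k))); rewrite has_find first_sat_lt.
by apply: opt_rooted; apply: mem_nth.
Qed.

End Double.

Theorem mainTheorem5 (R : realType) (D : nat) (hD : (0 < D)%N) :
  @competitive R D (@Double R D) (4 - 2 `^ (1 - D%:R / 2)).
Proof.
move=> c reqs [c_pos [arr_le_dl dl_uniq]].
pose x0 := @Request D R (Ordinal hD) 0 0.
rewrite served_all; split; first exact: (served_feasible x0).
exact: (served_competitive x0).
Qed.
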